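(* Let $\kappa_2$ be an infinite regular cardinal. If there exists an $(\aleph_0,\kappa_2)$-peculiar cut in ${}^\omega\omega$, then $\mathrm{cov}(\mathcal M)\le\kappa_2$.
   Context: $\mathrm{cov}(\mathcal M)$ is the least number of meagre subsets of the real line (equivalently of ${}^\omega2$) needed to cover it. For $f,g\in{}^\omega\omega$: $f\le^*g$ iff $f(n)\le g(n)$ for all but finitely many $n$; $f<^*g$ iff $f(n)<g(n)$ for all but finitely many $n$. For infinite regular cardinals $\kappa_1,\kappa_2$, a $(\kappa_1,\kappa_2)$-peculiar cut in ${}^\omega\omega$ is a pair $(\langle f_i:i<\kappa_1\rangle,\langle f^\alpha:\alpha<\kappa_2\rangle)$ of sequences in ${}^\omega\omega$ such that: ($\alpha$) $f_j<^*f_i$ for $i<j<\kappa_1$; ($\beta$) $f^\alpha<^*f^\beta$ for $\alpha<\beta<\kappa_2$; ($\gamma$) $f^\alpha<^*f_i$ for all $i<\kappa_1$, $\alpha<\kappa_2$; ($\delta$) if $f\in{}^\omega\omega$ and $f\le^*f_i$ for all $i<\kappa_1$, then $f\le^*f^\alpha$ for some $\alpha<\kappa_2$; ($\varepsilon$) if $f\in{}^\omega\omega$ and $f^\alpha\le^*f$ for all $\alpha<\kappa_2$, then $f_i\le^*f$ for some $i<\kappa_1$. *)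

From HB Require Import structures.
From mathcomp Require Import all_boot all_order all_algebra.
From mathcomp Require Import boolp classical_sets functions cardinality.
From mathcomp Require Import topology cantor.

Set Implicit Arguments.
Unset Strict Implicit.
Unset Printing Implicit Defensive.

Local Open Scope classical_set_scope.

Definition le_star (f g : nat -> nat) : Prop :=
  exists N : nat, forall n : nat, (N <= n)%N -> (f n <= g n)%N.

Definition lt_star (f g : nat -> nat) : Prop :=
  exists N : nat, forall n : nat, (N <= n)%N -> (f n < g n)%N.

(* ---------- infinite regular cardinals ----------
   An infinite regular cardinal kappa is represented by a type K together with
   a strict well-order [lt] on K whose order type is kappa, i.e. K "is" the set
   of ordinals below kappa.  The conditions say: [lt] is a strict well-order,
   K is infinite, every proper initial segment has strictly smaller cardinality
   (so the order type is an initial ordinal = a cardinal), and every unbounded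
   (cofinal) subset has the full cardinality (cf(kappa) = kappa: regularity). *)
Definition strict_well_order (K : Type) (lt : K -> K -> Prop) : Prop :=
  [/\ (forall a, ~ lt a a),
      (forall a b c, lt a b -> lt b c -> lt a c),
      (forall a b, [\/ lt a b, a = b | lt b a]) &
      well_founded lt].

Definition infinite_regular_cardinal (K : Type) (lt : K -> K -> Prop) : Prop :=
  [/\ strict_well_order lt,
      ~ finite_set [set: K],
      (forall a : K, ~ ([set: K] #<= [set b | lt b a])%card) &
      (forall S : set K, (forall a : K, exists2 b, S b & ~ lt b a) ->
         ([set: K] #<= S)%card)].

Definition peculiar_cut (K1 : Type) (lt1 : K1 -> K1 -> Prop)
  (K2 : Type) (lt2 : K2 -> K2 -> Prop)
  (flow : K1 -> nat -> nat) (fup : K2 -> nat -> nat) : Prop :=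
  [/\ (* alpha *) (forall i j : K1, lt1 i j -> lt_star (flow j) (flow i)),
      (* beta *)  (forall a b : K2, lt2 a b -> lt_star (fup a) (fup b)),
      (* gamma *) (forall (i : K1) (a : K2), lt_star (fup a) (flow i)),
      (* delta *) (forall f : nat -> nat, (forall i : K1, le_star f (flow i)) ->
                      exists a : K2, le_star f (fup a)) &
      (* epsilon *) (forall f : nat -> nat, (forall a : K2, le_star (fup a) f) ->
                      exists i : K1, le_star (flow i) f)].

Definition peculiar_cut_aleph0 (K2 : Type) (lt2 : K2 -> K2 -> Prop)
  (flow : nat -> nat -> nat) (fup : K2 -> nat -> nat) : Prop :=
  peculiar_cut (fun i j : nat => (i < j)%N) lt2 flow fup.

Definition nowhere_dense (A : set cantor_space) : Prop :=
  (closure A)° = set0.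

Definition meagre (A : set cantor_space) : Prop :=
  exists N : nat -> set cantor_space,
    (forall n, nowhere_dense (N n)) /\ A `<=` \bigcup_n N n.

Definition covM_le (K : Type) (A : set K) : Prop :=
  exists F : set (set cantor_space),
    [/\ (forall X, F X -> meagre X),
        (F #<= A)%card &
        \bigcup_(X in F) X = [set: cantor_space]].

(* Read x in 2^omega through the number [ones x m] of its 1s below m, and let
   [diag f x m] be the minimum of f_0 m, ..., f_k m for k = [ones x m].  If x
   has infinitely many 1s, then [diag f x] <=* f_k for every k, hence
   [diag f x] <=* f^alpha for some alpha by (delta).  For fixed alpha the set of
   such x is meagre: extending a finite prefix of x by 0s freezes the counter,
   after which [diag f] is a fixed running minimum of the f_k, which eventually
   exceeds f^alpha by (gamma).  Adding the meagre set of eventually-zero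
   sequences to each of these kappa_2 sets gives a cover of 2^omega. *)
From HB Require Import structures.
From mathcomp Require Import all_boot all_order all_algebra.
From mathcomp Require Import boolp classical_sets functions cardinality.
From mathcomp Require Import mathcomp_extra topology cantor.

Set Implicit Arguments.
Unset Strict Implicit.
Unset Printing Implicit Defensive.

Local Open Scope classical_set_scope.

Lemma cantor_prefix_nbhs (y : cantor_space) (n : nat) :
  nbhs y [set z : cantor_space | forall i, (i < n)%N -> y i = z i].
Proof.
elim: n => [|n IH].
  by apply: (@nearW _ _ _ (nbhs_filter y)) => z i; rewrite ltn0.
have yn : nbhs y (proj n @^-1` [set y n] : set cantor_space).
  apply: (@proj_continuous nat (fun _ => bool) n y).
  by apply: open_nbhs_nbhs; split => //; apply: discrete_open.
apply: (@filterS _ _ (nbhs_filter y) _ _ _ (filterI IH yn)) => z [yz yzn] i.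
by rewrite ltnS leq_eqVlt => /predU1P[->|/yz].
Qed.

Definition splice (x t : cantor_space) (L : nat) : cantor_space :=
  fun i => if (i < L)%N then x i else t i.

Lemma splice_cvg (x t : cantor_space) : splice x t L @[L --> \oo] --> x.
Proof.
apply/pointwise_cvgP => i; apply: cvg_near_cst.
by exists i.+1 => // L /= iL; rewrite /splice iL.
Qed.

Lemma nowhere_dense_cantor (A : set cantor_space) (t : cantor_space) :
  (forall (x : cantor_space) (L : nat), exists n, forall z : cantor_space,
     (forall i, (i < n)%N -> splice x t L i = z i) -> ~ A z) ->
  nowhere_dense A.
Proof.
move=> avoidA; apply/seteqP; split => [x Ax|//].
have [L _ /(_ L (leqnn L)) clAy] := splice_cvg t Ax.
have [n nA] := avoidA x L.
have [z [Az yz]] := clAy _ (cantor_prefix_nbhs (splice x t L) n).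
exact: nA yz Az.
Qed.

Lemma meagreU (A B : set cantor_space) : meagre A -> meagre B -> meagre (A `|` B).
Proof.
move=> [NA [ndA AN]] [NB [ndB BN]].
exists (fun n => if odd n then NB n./2 else NA n./2); split.
  by move=> n; case: ifP.
move=> x [/AN [k _ Nk]|/BN [k _ Nk]].
  by exists k.*2 => //; rewrite odd_double half_double.
by exists k.*2.+1 => //; rewrite /= odd_double uphalf_double.
Qed.

Definition eventually_zero : set cantor_space :=
  [set z | exists N, forall m, (N <= m)%N -> z m = false].

Lemma meagre_eventually_zero : meagre eventually_zero.
Proof.
exists (fun N => [set z : cantor_space | forall m, (N <= m)%N -> z m = false]).
split=> [N|x [N xN]]; last by exists N.
apply: (nowhere_dense_cantor (t := fun _ => true)) => x L.
exists (maxn L N).+1 => z xz zN.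
by have := zN _ (leq_maxr L N); rewrite -xz // /splice ltnNge leq_maxl.
Qed.

Definition ones (x : nat -> bool) (m : nat) : nat := count x (iota 0 m).

Lemma onesS (x : nat -> bool) m : ones x m.+1 = (ones x m + x m)%N.
Proof. by rewrite /ones -addn1 iotaD count_cat /= addn0. Qed.

Lemma ones_prefix (x y : nat -> bool) m :
  (forall i, (i < m)%N -> x i = y i) -> ones x m = ones y m.
Proof. by move=> xy; apply: eq_in_count => i; rewrite mem_iota => /xy. Qed.

Lemma ones_mono (x : nat -> bool) : {homo ones x : m n / (m <= n)%N}.
Proof.
move=> m n mn; rewrite /ones -(subnKC mn) iotaD count_cat.
exact: leq_addr.
Qed.

Lemma ones_splice_false (x : cantor_space) L m : (L <= m)%N ->
  ones (splice x (fun _ => false) L) m = ones x L.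
Proof.
move=> Lm; rewrite /ones -(subnKC Lm) iotaD count_cat add0n.
rewrite [X in (_ + X)%N](@eq_in_count _ _ pred0) ?count_pred0 ?addn0.
  by apply: ones_prefix => i iL; rewrite /splice iL.
by move=> i; rewrite mem_iota /splice => /andP[Li _]; rewrite ltnNge Li.
Qed.

Lemma ones_unbounded (x : cantor_space) :
  ~ eventually_zero x -> forall n, exists M, (n <= ones x M)%N.
Proof.
move=> xinf; elim=> [|n [M nM]]; first by exists 0%N.
have [m [Mm xm]] : exists m, (M <= m)%N /\ x m.
  apply: contrapT => noone; apply: xinf; exists M => m Mm.
  by apply/negbTE/negP => xm; apply: noone; exists m.
exists m.+1; rewrite onesS xm addn1 ltnS.
exact: leq_trans nM (ones_mono x Mm).
Qed.

Section DiagonalBound.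

Variable f : nat -> nat -> nat.

Fixpoint running_min (k m : nat) : nat :=
  if k is k'.+1 then minn (running_min k' m) (f k'.+1 m) else f 0 m.

Lemma running_min_le k m : (running_min k m <= f k m)%N.
Proof. by case: k => //= k; rewrite geq_minr. Qed.

Lemma running_min_anti k l m :
  (k <= l)%N -> (running_min l m <= running_min k m)%N.
Proof.
elim: l => [|l IH]; first by rewrite leqn0 => /eqP ->.
rewrite leq_eqVlt => /predU1P[-> //|]; rewrite ltnS => /IH.
by apply: leq_trans; rewrite /= geq_minl.
Qed.

Lemma lt_star_running_min (g : nat -> nat) :
  (forall i, lt_star g (f i)) -> forall k, lt_star g (running_min k).
Proof.
move=> gf; elim=> [|k [M gM]]; first exact: gf.
have [M' gM'] := gf k.+1.
exists (maxn M M') => m; rewrite geq_max => /andP[Mm M'm] /=.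
by rewrite leq_min gM ?gM'.
Qed.

Definition diag (x : nat -> bool) (m : nat) : nat := running_min (ones x m) m.

Lemma le_star_diag (x : cantor_space) :
  ~ eventually_zero x -> forall i, le_star (diag x) (f i).
Proof.
move=> xinf i; have [M iM] := ones_unbounded xinf i.
exists M => m Mm; apply: leq_trans (running_min_le i m).
exact/running_min_anti/(leq_trans iM)/ones_mono.
Qed.

Lemma meagre_le_star_diag (g : nat -> nat) :
  (forall i, lt_star g (f i)) -> meagre [set z | le_star (diag z) g].
Proof.
move=> gf; exists (fun N =>
  [set z : cantor_space | forall m, (N <= m)%N -> (diag z m <= g m)%N]).
split=> [N|x [N xN]]; last by exists N.
apply: (nowhere_dense_cantor (t := fun _ => false)) => x L.
have [M gM] := lt_star_running_min gf (ones x L).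
exists (maxn (maxn L N) M) => z xz zN.
have [LNm Mm] : (maxn L N <= maxn (maxn L N) M /\ M <= maxn (maxn L N) M)%N.
  by split; [apply: leq_maxl | apply: leq_maxr].
have := zN _ (leq_trans (leq_maxr L N) LNm).
rewrite /diag -(ones_prefix xz) ones_splice_false; last first.
  exact: leq_trans (leq_maxl L N) LNm.
by rewrite leqNgt gM.
Qed.

End DiagonalBound.

(* Only (gamma) and (delta) of the cut are needed. *)
Theorem corollary3p2 (K2 : Type) (lt2 : K2 -> K2 -> Prop) :
  infinite_regular_cardinal lt2 ->
  (exists (flow : nat -> nat -> nat) (fup : K2 -> nat -> nat),
      peculiar_cut_aleph0 lt2 flow fup) ->
  covM_le [set: K2].
Proof.
move=> _ [f [fup [_ _ fup_lt le_fup _]]].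
have [a0 _] : exists a, le_star (fun _ => 0%N) (fup a).
  by apply: le_fup => i; exists 0%N.
pose cover a := [set z | le_star (diag f z) (fup a)] `|` eventually_zero.
exists (range cover); split.
- move=> _ [a _ <-]; apply: meagreU; last exact: meagre_eventually_zero.
  by apply: meagre_le_star_diag => i; apply: fup_lt.
- exact: card_image_le.
- apply/seteqP; split => // x _.
  have [x0|xinf] := pselect (eventually_zero x).
    by exists (cover a0); [exists a0 | right].
  have [a xa] := le_fup _ (le_star_diag f xinf).
  by exists (cover a); [exists a | left].
Qed.
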